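(* Let $\mathscr{A}$ be a Kripke structure, $a\in A$, and $k>0$. There is an $\mathbb{M}_k$-coalgebra $\alpha:(\mathscr{A},a)\to\mathbb{M}_k(\mathscr{A},a)$ if and only if the submodel generated by $a$ is a synchronization tree of height $\le k$.
   Context: Kripke structures: $\sigma$-structures with unary symbols $P$ and binary symbols $R_\alpha$; write $a\xrightarrow{\alpha}a'$ for $R_\alpha^{\mathscr{A}}(a,a')$. $\mathbb{M}_k(\mathscr{A},a)$: universe $[a]$ (the point) plus all $[a_0,\alpha_1,a_1,\dots,\alpha_j,a_j]$ with $a_0=a$, $1\le j\le k$, $a_i\xrightarrow{\alpha_{i+1}}a_{i+1}$; $P(s)$ iff $P^{\mathscr{A}}$ holds of the last element $\varepsilon(s)$; $R_\alpha(s,t)$ iff $t=s[\alpha,a']$. Comultiplication: $\delta[a_0,\alpha_1,a_1,\dots,\alpha_j,a_j]=[[a_0],\alpha_1,[a_0,\alpha_1,a_1],\dots,\alpha_j,[a_0,\alpha_1,\dots,\alpha_j,a_j]]$; functor action on a point-preserving homomorphism $h$: $\mathbb{M}_k h[a_0,\alpha_1,a_1,\dots]=[h(a_0),\alpha_1,h(a_1),\dots]$. A coalgebra is a point-preserving homomorphism $\alpha:(\mathscr{A},a)\to\mathbb{M}_k(\mathscr{A},a)$ with $\delta\circ\alpha=\mathbb{M}_k\alpha\circ\alpha$ and $\varepsilon\circ\alpha=\mathrm{id}$. The submodel generated by $a$ is the restriction of $\mathscr{A}$ to elements $a'$ reachable by a finite path $a\xrightarrow{\alpha_1}\cdots\xrightarrow{\alpha_m}a'$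 ($m\ge0$); it is a synchronization tree if each such $a'$ is reached by a unique such path, and its height is the maximum length of such a path.
   Formalization: The right-hand side of the equivalence also includes that every element of $\mathscr{A}$ is reachable from a by a finite path, so $\mathscr{A}$ is itself the submodel generated by a. The statement above fails without it. *)

From Stdlib Require Import List Arith.
Import ListNotations.
Set Implicit Arguments.

(* A Kripke structure over a signature with unary symbols PS and binary
   (action) symbols Act is given by a carrier A, P : PS -> A -> Prop and
   R : Act -> A -> A -> Prop;  R b x y  means  x --b--> y. *)

(* A (formal) path [a0, b1, a1, ..., bj, aj] is represented as
   (a0, [(b1,a1); ...; (bj,aj)]). *)
Definition kpath (X Act : Type) : Type := (X * list (Act * X))%type.

Fixpoint chain (X Act : Type) (R : Act -> X -> X -> Prop) (x : X)
  (l : list (Act * X)) : Prop :=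
  match l with
  | [] => True
  | (b, y) :: l' => R b x y /\ chain R y l'
  end.

Fixpoint lastl (X Act : Type) (x : X) (l : list (Act * X)) : X :=
  match l with
  | [] => x
  | (_, y) :: l' => lastl y l'
  end.

Definition plast (X Act : Type) (s : kpath X Act) : X := lastl (fst s) (snd s).

Definition Mk_elem (A Act : Type) (R : Act -> A -> A -> Prop) (a : A) (k : nat)
  (s : kpath A Act) : Prop :=
  fst s = a /\ chain R a (snd s) /\ length (snd s) <= k.

Fixpoint delta_aux (X Act : Type) (a0 : X) (pre : list (Act * X))
  (l : list (Act * X)) : list (Act * kpath X Act) :=
  match l with
  | [] => []
  | (b, x) :: l' =>
      (b, (a0, pre ++ [(b, x)])) :: delta_aux a0 (pre ++ [(b, x)]) l'
  end.

(* comultiplication delta[a0,b1,a1,...] = [[a0], b1, [a0,b1,a1], ...] *)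
Definition delta (X Act : Type) (s : kpath X Act) : kpath (kpath X Act) Act :=
  ((fst s, []), delta_aux (fst s) [] (snd s)).

Definition Mmap (X Y Act : Type) (h : X -> Y) (s : kpath X Act) : kpath Y Act :=
  (h (fst s), map (fun p => (fst p, h (snd p))) (snd s)).

(* alpha : (A,a) -> M_k(A,a) is an M_k-coalgebra:
   a point-preserving homomorphism into M_k(A,a) with
   delta o alpha = M_k alpha o alpha and eps o alpha = id. *)
Definition is_Mk_coalgebra (PS Act A : Type) (P : PS -> A -> Prop)
  (R : Act -> A -> A -> Prop) (a : A) (k : nat) (alpha : A -> kpath A Act) : Prop :=
  (forall x, Mk_elem R a k (alpha x)) /\
  alpha a = (a, []) /\
  (* preserves unary relations: P(s) iff P holds of eps(s) *)
  (forall p x, P p x -> P p (plast (alpha x))) /\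
  (* preserves binary relations: R_b(s,t) iff t = s[b,a'] *)
  (forall b x y, R b x y ->
     exists y', alpha y = (fst (alpha x), snd (alpha x) ++ [(b, y')])) /\
  (forall x, delta (alpha x) = Mmap alpha (alpha x)) /\
  (forall x, plast (alpha x) = x).

Definition reachable (A Act : Type) (R : Act -> A -> A -> Prop) (a x : A) : Prop :=
  exists l : list (Act * A), chain R a l /\ lastl a l = x.

Definition gen_R (A Act : Type) (R : Act -> A -> A -> Prop) (a : A) :
  Act -> A -> A -> Prop :=
  fun b x y => reachable R a x /\ reachable R a y /\ R b x y.

Definition gen_sync_tree (A Act : Type) (R : Act -> A -> A -> Prop) (a : A) : Prop :=
  forall l1 l2 : list (Act * A),
    chain (gen_R R a) a l1 -> chain (gen_R R a) a l2 ->
    lastl a l1 = lastl a l2 -> l1 = l2.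

Definition gen_height_le (A Act : Type) (R : Act -> A -> A -> Prop) (a : A) (k : nat) : Prop :=
  forall l : list (Act * A), chain (gen_R R a) a l -> length l <= k.

(* A coalgebra α sends each state x to a path from a ending in x (counit law),
   and the homomorphism condition, applied edge by edge, forces α to send the
   endpoint of every path l from a back to l itself.  Hence paths from a are
   determined by their endpoints and have length at most k.  Conversely, in a
   synchronization tree of height ≤ k the map sending each state to its unique
   path from a is a coalgebra; coassociativity holds because the prefixes of
   the path of x are the paths of the states visited on the way to x. *)

From Stdlib Require Import List ClassicalEpsilon.
Import ListNotations.

Section Paths.

Context {X Act : Type}.
Implicit Types (R S : Act -> X -> X -> Prop) (l : list (Act * X)).

Lemma chain_app R l1 l2 x :
  chain R x (l1 ++ l2) <-> chain R x l1 /\ chain R (lastl x l1) l2.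
Proof.
  revert x; induction l1 as [|[b y] l1 IH]; intros x; simpl.
  - tauto.
  - rewrite IH. tauto.
Qed.

Lemma lastl_app l1 l2 x : lastl x (l1 ++ l2) = lastl (lastl x l1) l2.
Proof.
  revert x; induction l1 as [|[b y] l1 IH]; intros x; simpl; auto.
Qed.

Lemma chain_rcons R l b y x :
  chain R x (l ++ [(b, y)]) <-> chain R x l /\ R b (lastl x l) y.
Proof.
  rewrite chain_app; simpl; tauto.
Qed.

Lemma lastl_rcons l b y x : lastl x (l ++ [(b, y)]) = y.
Proof.
  now rewrite lastl_app.
Qed.

Lemma chain_impl R S :
  (forall b x y, R b x y -> S b x y) -> forall l x, chain R x l -> chain S x l.
Proof.
  intros HRS l; induction l as [|[b y] l IH]; intros x; simpl; [auto|].
  intros [Hxy Hl]; auto.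
Qed.

End Paths.

Section GeneratedSubmodel.

Context {A Act : Type} {R : Act -> A -> A -> Prop} {a : A}.

Lemma reachable_step {x b y} : reachable R a x -> R b x y -> reachable R a y.
Proof.
  intros [l [Hl <-]] Hxy.
  exists (l ++ [(b, y)]).
  now rewrite chain_rcons, lastl_rcons.
Qed.

Lemma chain_gen_R_reachable l x :
  reachable R a x -> chain R x l -> chain (gen_R R a) x l.
Proof.
  revert x; induction l as [|[b y] l IH]; intros x Hx; simpl; [auto|].
  intros [Hxy Hl].
  assert (Hy : reachable R a y) by exact (reachable_step Hx Hxy).
  repeat split; auto.
Qed.

Lemma chain_gen_R_from_root l : chain (gen_R R a) a l <-> chain R a l.
Proof.
  split.
  - apply chain_impl; intros b x y (_ & _ & Hxy); exact Hxy.
  - apply chain_gen_R_reachable; now exists [].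
Qed.

Lemma gen_sync_tree_iff_unique_paths :
  gen_sync_tree R a <->
  (forall l1 l2, chain R a l1 -> chain R a l2 -> lastl a l1 = lastl a l2 -> l1 = l2).
Proof.
  unfold gen_sync_tree; split; intros Huniq l1 l2 H1 H2;
    apply Huniq; apply chain_gen_R_from_root; assumption.
Qed.

Lemma gen_height_le_iff k :
  gen_height_le R a k <-> (forall l, chain R a l -> length l <= k).
Proof.
  unfold gen_height_le; split; intros Hk l Hl; apply Hk, chain_gen_R_from_root, Hl.
Qed.

End GeneratedSubmodel.

Definition labels_paths {A Act : Type} (R : Act -> A -> A -> Prop) (a : A)
  (alpha : A -> kpath A Act) : Prop :=
  forall l, chain R a l -> alpha (lastl a l) = (a, l).

Section PathLabelling.

Context {PS Act A : Type} {P : PS -> A -> Prop} {R : Act -> A -> A -> Prop} {a : A}.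

Lemma coalgebra_labels_paths {k alpha} :
  is_Mk_coalgebra P R a k alpha -> labels_paths R a alpha.
Proof.
  intros (_ & Hpoint & _ & Hhom & _ & Hcounit) l.
  induction l as [|[b y] l IH] using rev_ind; [easy|].
  rewrite chain_rcons, lastl_rcons; intros [Hl Hb].
  destruct (Hhom _ _ _ Hb) as [y' Hy]; rewrite (IH Hl) in Hy; simpl in Hy.
  assert (Hy' : y' = y).
  { specialize (Hcounit y); rewrite Hy in Hcounit.
    unfold plast in Hcounit; simpl in Hcounit.
    now rewrite lastl_rcons in Hcounit. }
  now subst y'.
Qed.

Lemma coalgebra_reachable {k alpha} x :
  is_Mk_coalgebra P R a k alpha -> reachable R a x.
Proof.
  intros (Helem & _ & _ & _ & _ & Hcounit).
  destruct (Helem x) as (Hroot & Hchain & _).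
  exists (snd (alpha x)); split; [exact Hchain|].
  specialize (Hcounit x); unfold plast in Hcounit.
  now rewrite Hroot in Hcounit.
Qed.

Lemma coalgebra_height_le {k alpha} l :
  is_Mk_coalgebra P R a k alpha -> chain R a l -> length l <= k.
Proof.
  intros Hcoalg Hl.
  pose proof (coalgebra_labels_paths Hcoalg l Hl) as Hpath.
  destruct Hcoalg as [Helem _].
  destruct (Helem (lastl a l)) as (_ & _ & Hlen).
  now rewrite Hpath in Hlen.
Qed.

Lemma labels_paths_unique {alpha} :
  labels_paths R a alpha ->
  forall l1 l2, chain R a l1 -> chain R a l2 -> lastl a l1 = lastl a l2 -> l1 = l2.
Proof.
  intros Hlab l1 l2 H1 H2 Hend.
  apply Hlab in H1; apply Hlab in H2.
  rewrite Hend, H2 in H1.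
  now injection H1.
Qed.

Lemma labels_paths_of_reachable {alpha x} :
  labels_paths R a alpha -> reachable R a x ->
  exists l, chain R a l /\ lastl a l = x /\ alpha x = (a, l).
Proof.
  intros Hlab [l [Hl <-]].
  exists l; auto.
Qed.

Lemma exists_labels_paths :
  (forall x, reachable R a x) ->
  (forall l1 l2, chain R a l1 -> chain R a l2 -> lastl a l1 = lastl a l2 -> l1 = l2) ->
  exists alpha, labels_paths R a alpha.
Proof.
  intros Hreach Huniq.
  destruct (choice _ Hreach) as [path Hpath].
  exists (fun x => (a, path x)); intros l Hl.
  destruct (Hpath (lastl a l)) as [Hchain Hend].
  now rewrite (Huniq _ _ Hchain Hl Hend).
Qed.

Lemma delta_aux_labels_paths {alpha} :
  labels_paths R a alpha ->
  forall l pre, chain R a (pre ++ l) ->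
  delta_aux a pre l = map (fun p => (fst p, alpha (snd p))) l.
Proof.
  intros Hlab l; induction l as [|[b y] l IH]; intros pre Hl; simpl; [easy|].
  replace (pre ++ (b, y) :: l) with ((pre ++ [(b, y)]) ++ l) in Hl
    by now rewrite <- app_assoc.
  rewrite (IH _ Hl).
  apply chain_app in Hl as [Hpre _].
  specialize (Hlab _ Hpre); rewrite lastl_rcons in Hlab.
  now rewrite Hlab.
Qed.

Lemma labels_paths_coalgebra {k alpha} :
  (forall x, reachable R a x) -> (forall l, chain R a l -> length l <= k) ->
  labels_paths R a alpha -> is_Mk_coalgebra P R a k alpha.
Proof.
  intros Hreach Hheight Hlab.
  assert (Hpath : forall x, exists l, chain R a l /\ lastl a l = x /\ alpha x = (a, l))
    by (intros x; exact (labels_paths_of_reachable Hlab (Hreach x))).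
  assert (Hcounit : forall x, plast (alpha x) = x).
  { intros x; destruct (Hpath x) as (l & _ & Hend & ->); exact Hend. }
  repeat split.
  - destruct (Hpath x) as (l & _ & _ & ->); reflexivity.
  - destruct (Hpath x) as (l & Hl & _ & ->); exact Hl.
  - destruct (Hpath x) as (l & Hl & _ & ->); exact (Hheight l Hl).
  - exact (Hlab [] I).
  - intros p x; now rewrite Hcounit.
  - intros b x y Hxy; destruct (Hpath x) as (l & Hl & <- & ->).
    exists y; rewrite <- (lastl_rcons l b y a) at 1.
    apply Hlab, chain_rcons; auto.
  - intros x; destruct (Hpath x) as (l & Hl & _ & ->).
    unfold delta, Mmap; simpl.
    rewrite (delta_aux_labels_paths Hlab l []) by exact Hl.
    now rewrite (Hlab [] I : alpha a = (a, [])).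
  - exact Hcounit.
Qed.

End PathLabelling.

Theorem mainTheorem15 (PS Act A : Type) (P : PS -> A -> Prop)
  (R : Act -> A -> A -> Prop) (a : A) (k : nat) (hk : 0 < k) :
  (exists alpha : A -> kpath A Act, is_Mk_coalgebra P R a k alpha) <->
  ((forall x : A, reachable R a x) /\
   gen_sync_tree R a /\ gen_height_le R a k).
Proof.
  rewrite gen_sync_tree_iff_unique_paths, gen_height_le_iff.
  split.
  - intros [alpha Hcoalg].
    repeat split.
    + intros x; exact (coalgebra_reachable x Hcoalg).
    + exact (labels_paths_unique (coalgebra_labels_paths Hcoalg)).
    + intros l; exact (coalgebra_height_le l Hcoalg).
  - intros (Hreach & Huniq & Hheight).
    destruct (exists_labels_paths Hreach Huniq) as [alpha Hlab].
    exists alpha; exact (labels_paths_coalgebra Hreach Hheight Hlab).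
Qed.
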